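(* There is an open set $U\subseteq2^\omega$ with $\Phi(U)=U$ such that its frontier $\mathrm{Fr}\,U=\mathrm{Cl}\,U\setminus\mathrm{Int}\,U$ has positive measure.
   Context: $2^\omega$ is the Cantor space; $N_s=\{x:s\subset x\}$; $\mu$ the coin-tossing measure with $\mu(N_s)=2^{-\mathrm{lh}(s)}$. For measurable $A$, $\Phi(A)=\{x:\lim_n\mu(A\cap N_{x\restriction n})/\mu(N_{x\restriction n})=1\}$. *)

From Stdlib Require Import Reals List.
Import ListNotations.
Open Scope R_scope.

Definition cantor := nat -> bool.
Definition cset := cantor -> Prop.

Definition restr (x : cantor) (n : nat) : list bool := map x (seq 0 n).

Definition Nbasic (s : list bool) : cset :=
  fun x => forall i : nat, (i < length s)%nat -> x i = nth i s false.

(* weight of a (possibly absent) basic set: mu(N_s) = 2^{-lh s} *)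
Definition wt (o : option (list bool)) : R :=
  match o with Some s => (/ 2) ^ length s | None => 0 end.

Definition covers (A : cset) (c : nat -> option (list bool)) : Prop :=
  forall x, A x -> exists k s, c k = Some s /\ Nbasic s x.

Definition cover_bound (A : cset) (l : R) : Prop :=
  exists c, covers A c /\ forall n, sum_f_R0 (fun k => wt (c k)) n <= l.

Definition neg_cover_bound (A : cset) (y : R) : Prop := cover_bound A (- y).

Lemma neg_cover_bound_bound (A : cset) : bound (neg_cover_bound A).
Proof.
  exists 0. intros y [c [_ H]]. specialize (H 0%nat). simpl in H.
  assert (0 <= wt (c 0%nat)).
  { destruct (c 0%nat); simpl; [apply pow_le; left; apply Rinv_0_lt_compat; apply Rlt_0_2 | apply Rle_refl]. }
  apply Ropp_le_cancel. rewrite Ropp_0. eapply Rle_trans; eauto.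
Qed.

Lemma neg_cover_bound_ne (A : cset) : exists y, neg_cover_bound A y.
Proof.
  exists (-1). exists (fun k => match k with O => Some nil | _ => None end).
  split.
  - intros x _. exists O, nil. split; [reflexivity|]. intros i Hi; simpl in Hi; inversion Hi.
  - intro n. replace (- -1) with 1 by ring. induction n; simpl.
    + right; reflexivity.
    + rewrite Rplus_0_r. exact IHn.
Qed.

(* The coin-tossing outer measure:
   mu*(A) = inf { sum_k 2^{-lh(s_k)} : A subset of U_k N_{s_k} }.
   It agrees with the coin-tossing measure mu on measurable sets. *)
Definition mu (A : cset) : R :=
  - proj1_sig (completeness (neg_cover_bound A)
                 (neg_cover_bound_bound A) (neg_cover_bound_ne A)).

Definition cinter (A B : cset) : cset := fun x => A x /\ B x.

Definition Phi (A : cset) : cset :=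
  fun x => Un_cv (fun n => mu (cinter A (Nbasic (restr x n))) / mu (Nbasic (restr x n))) 1.

Definition is_open (U : cset) : Prop :=
  forall x, U x -> exists n, forall y, Nbasic (restr x n) y -> U y.
Definition Int (A : cset) : cset :=
  fun x => exists n, forall y, Nbasic (restr x n) y -> A y.
Definition Cl (A : cset) : cset :=
  fun x => forall n, exists y, Nbasic (restr x n) y /\ A y.
Definition Fr (A : cset) : cset := fun x => Cl A x /\ ~ Int A x.

(** The set is [U0 = U_j N_{b_j}], where [s_j] enumerates all finite strings and
    the block [b_j = s_j 1^{j+2}] is [s_j] followed by [j + 2] ones.
    - [U0] is open, and dense since every [s_j] is extended by [b_j]; hence its
      frontier is its complement.  The blocks have total weight [<= 1/2], so
      [mu(Fr U0) >= 1 - 1/2].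
    - Open sets consist of density points.  Conversely a point [x] outside [U0]
      has infinitely many zeros (otherwise it would lie in the block built on an
      initial segment of [x]); at a level [n] with [x(n-1) = 0], the only blocks
      meeting [N_{x|n}] extend [x|n], so [U0] has density [<= 1/2] there.

    The essential
    analytic input is the lower bound [mu(N_s) >= 2^{-|s|}], proved from the
    compactness of cylinders (König's lemma) and a halving induction on finite
    covers; with subadditivity it gives the complement bound used above. *)
From Stdlib Require Import Reals List Lra Lia PArith Classical ClassicalEpsilon.
Import ListNotations.
Open Scope R_scope.

(** * Finite strings and cylinders *)

Definition is_prefix (s t : list bool) : Prop :=
  (length s <= length t)%nat /\
  forall i, (i < length s)%nat -> nth i s false = nth i t false.

Lemma Nbasic_prefix s t y : is_prefix s t -> Nbasic t y -> Nbasic s y.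
Proof. intros [Hl Hp] H i Hi. rewrite Hp by lia. apply H. lia. Qed.

Lemma prefix_of_Nbasic s t y :
  Nbasic s y -> Nbasic t y -> (length s <= length t)%nat -> is_prefix s t.
Proof. intros Hs Ht Hl. split; auto. intros i Hi. rewrite <- Hs, <- Ht by lia. auto. Qed.

Lemma is_prefix_trans a b c : is_prefix a b -> is_prefix b c -> is_prefix a c.
Proof. intros [H1 H2] [H3 H4]. split; [lia|]. intros i Hi. rewrite H2, H4 by lia. auto. Qed.

Lemma is_prefix_snoc s b : is_prefix s (s ++ [b]).
Proof.
  split; [rewrite length_app; simpl; lia|].
  intros i Hi. rewrite app_nth1; auto.
Qed.

Lemma children_disjoint s t : is_prefix (s ++ [false]) t -> ~ is_prefix (s ++ [true]) t.
Proof.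
  intros [_ Hf] [_ Ht].
  assert (Hlen : forall b, (length s < length (s ++ [b]))%nat)
    by (intro b; rewrite length_app; simpl; lia).
  specialize (Hf _ (Hlen false)). specialize (Ht _ (Hlen true)).
  rewrite !app_nth2, Nat.sub_diag in Hf, Ht by lia. simpl in Hf, Ht. congruence.
Qed.

Definition pt (s : list bool) : cantor := fun i => nth i s false.

Lemma Nbasic_pt s : Nbasic s (pt s).
Proof. intros i Hi. reflexivity. Qed.

Lemma Nbasic_snoc s b y : Nbasic (s ++ [b]) y <-> Nbasic s y /\ y (length s) = b.
Proof.
  split.
  - intro H. split.
    + intros i Hi. rewrite H by (rewrite length_app; simpl; lia). rewrite app_nth1; auto.
    + rewrite H by (rewrite length_app; simpl; lia).
      rewrite app_nth2, Nat.sub_diag by lia. reflexivity.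
  - intros [H Hb] i Hi. rewrite length_app in Hi; simpl in Hi.
    destruct (Nat.lt_ge_cases i (length s)).
    + rewrite app_nth1; auto.
    + replace i with (length s) by lia. rewrite app_nth2, Nat.sub_diag by lia. auto.
Qed.

Lemma restr_length x n : length (restr x n) = n.
Proof. unfold restr. rewrite length_map, length_seq. auto. Qed.

Lemma restr_nth x n i : (i < n)%nat -> nth i (restr x n) false = x i.
Proof.
  intro H. unfold restr.
  rewrite nth_indep with (d' := x 0%nat) by (rewrite length_map, length_seq; auto).
  rewrite map_nth, seq_nth by auto. reflexivity.
Qed.

Lemma Nbasic_restr x n : Nbasic (restr x n) x.
Proof. intros i Hi. rewrite restr_length in Hi. rewrite restr_nth; auto. Qed.

Lemma restr_of_Nbasic t x : Nbasic t x -> restr x (length t) = t.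
Proof.
  intro H. apply nth_ext with false false; rewrite restr_length; auto.
  intros i Hi. rewrite restr_nth, H; auto.
Qed.

Lemma Nbasic_restr_sub t x y n :
  Nbasic t x -> (length t <= n)%nat -> Nbasic (restr x n) y -> Nbasic t y.
Proof.
  intros Ht Hn. apply Nbasic_prefix, (prefix_of_Nbasic _ _ x); auto.
  - apply Nbasic_restr.
  - rewrite restr_length; auto.
Qed.

Lemma pow_half_pos n : 0 < (/2) ^ n.
Proof. apply pow_lt; lra. Qed.

Lemma pow_half_antitone m n : (m <= n)%nat -> (/2) ^ n <= (/2) ^ m.
Proof.
  induction 1; [lra|]. eapply Rle_trans; [|exact IHle]. simpl.
  pose proof (pow_half_pos m0). lra.
Qed.

Lemma wt_nonneg o : 0 <= wt o.
Proof. destruct o; simpl; [left; apply pow_half_pos | lra]. Qed.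

Lemma term_le_partial_sum (f : nat -> R) k M :
  (forall i, 0 <= f i) -> (k <= M)%nat -> f k <= sum_f_R0 f M.
Proof.
  intros Hf. induction M; intro Hk.
  - replace k with 0%nat by lia. simpl. lra.
  - rewrite tech5. destruct (Nat.eq_dec k (S M)) as [->|Hne].
    + pose proof (cond_pos_sum f M Hf). lra.
    + specialize (IHM ltac:(lia)). specialize (Hf (S M)). lra.
Qed.

Lemma partial_sum_mono (f : nat -> R) m n :
  (forall i, 0 <= f i) -> (m <= n)%nat -> sum_f_R0 f m <= sum_f_R0 f n.
Proof.
  intros Hf. induction 1; [lra|]. rewrite tech5. specialize (Hf (S m0)). lra.
Qed.

(** * Compactness of cylinders *)

Definition fcovers (A : cset) (c : nat -> option (list bool)) (M : nat) : Prop :=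
  forall x, A x -> exists k t, (k <= M)%nat /\ c k = Some t /\ Nbasic t x.

Lemma koenig (bad : list bool -> Prop) s :
  bad s -> (forall t, bad t -> bad (t ++ [false]) \/ bad (t ++ [true])) ->
  exists x, Nbasic s x /\ forall n, (length s <= n)%nat -> bad (restr x n).
Proof.
  intros Hs Hsplit.
  set (next := fun t => if excluded_middle_informative (bad (t ++ [false]))
                        then t ++ [false] else t ++ [true]).
  assert (Hnext : forall t, bad t -> bad (next t) /\ exists b, next t = t ++ [b]).
  { intros t Ht. unfold next. destruct (excluded_middle_informative _) as [Hf|Hf].
    - eauto.
    - destruct (Hsplit t Ht); [contradiction|eauto]. }
  set (path := fun m => Nat.iter m next s).
  assert (Hpath : forall m, bad (path m) /\ length (path m) = (length s + m)%nat).
  { induction m as [|m [Hb Hl]]; [split; [exact Hs | simpl; lia]|].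
    destruct (Hnext _ Hb) as [Hb' [b Hb'']].
    change (path (S m)) with (next (path m)). rewrite Hb'' in *.
    rewrite length_app, Hl. simpl. split; [exact Hb'|lia]. }
  assert (Hchain : forall m k, is_prefix (path m) (path (m + k)%nat)).
  { intros m k. induction k as [|k IH].
    - rewrite Nat.add_0_r. split; auto.
    - eapply is_prefix_trans; [exact IH|]. rewrite Nat.add_succ_r.
      change (path (S (m + k))%nat) with (next (path (m + k)%nat)).
      destruct (Hnext _ (proj1 (Hpath (m + k)%nat))) as [_ [b ->]].
      apply is_prefix_snoc. }
  set (x := fun i => nth i (path (S i)) false).
  assert (Hx : forall m, Nbasic (path m) x).
  { intros m i Hi. unfold x. destruct (Nat.le_gt_cases m (S i)).
    - replace (S i) with (m + (S i - m))%nat by lia. symmetry. apply (proj2 (Hchain _ _)); auto.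
    - replace m with (S i + (m - S i))%nat by lia. apply (proj2 (Hchain _ _)).
      rewrite (proj2 (Hpath _)). lia. }
  exists x. split; [exact (Hx 0%nat)|].
  intros n Hn. replace n with (length (path (n - length s)%nat)) by (rewrite (proj2 (Hpath _)); lia).
  rewrite restr_of_Nbasic by apply Hx. apply Hpath.
Qed.

Lemma fcovers_split t c M0 M1 :
  fcovers (Nbasic (t ++ [false])) c M0 -> fcovers (Nbasic (t ++ [true])) c M1 ->
  fcovers (Nbasic t) c (max M0 M1).
Proof.
  intros H0 H1 y Hy.
  destruct (y (length t)) eqn:E;
    [destruct (H1 y (proj2 (Nbasic_snoc _ _ _) (conj Hy E))) as [k [u [Hk Hu]]]
    |destruct (H0 y (proj2 (Nbasic_snoc _ _ _) (conj Hy E))) as [k [u [Hk Hu]]]];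
    exists k, u; split; auto; lia.
Qed.

Lemma cylinder_compact s c : covers (Nbasic s) c -> exists M, fcovers (Nbasic s) c M.
Proof.
  intros Hc. apply NNPP. intro Hno.
  destruct (koenig (fun t => forall M, ~ fcovers (Nbasic t) c M) s) as [x [Hxs Hx]].
  - intros M HM. apply Hno. eauto.
  - intros t Ht. destruct (classic (forall M, ~ fcovers (Nbasic (t ++ [false])) c M)) as [|H0];
      [left; auto | right].
    apply not_all_not_ex in H0 as [M0 HM0]. intros M1 HM1.
    exact (Ht _ (fcovers_split _ _ _ _ HM0 HM1)).
  - destruct (Hc x Hxs) as [k [u [Hcu Hu]]].
    apply (Hx (max (length s) (length u)) ltac:(lia) k). intros y Hy.
    exists k, u. repeat split; auto. apply (Nbasic_restr_sub u x y (max (length s) (length u))); auto. lia.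
Qed.

Lemma cover_length_bound (c : nat -> option (list bool)) M :
  exists B, forall k t, (k <= M)%nat -> c k = Some t -> (length t <= B)%nat.
Proof.
  induction M as [|M [B HB]].
  - exists (match c 0%nat with Some t => length t | None => 0 end)%nat.
    intros k t Hk Hct. replace k with 0%nat in * by lia. rewrite Hct. lia.
  - exists (max B (match c (S M) with Some t => length t | None => 0 end))%nat.
    intros k t Hk Hct. destruct (Nat.eq_dec k (S M)) as [->|Hne].
    + rewrite Hct. lia.
    + specialize (HB k t ltac:(lia) Hct). lia.
Qed.

(** * The measure of a cylinder *)

Definition restrict_cover (P : list bool -> Prop) (c : nat -> option (list bool)) (k : nat)
  : option (list bool) :=
  match c k with
  | Some t => if excluded_middle_informative (P t) then Some t else None
  | None => None
  end.

Lemma restrict_cover_Some P c k t :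
  restrict_cover P c k = Some t <-> c k = Some t /\ P t.
Proof.
  unfold restrict_cover. destruct (c k) as [u|].
  - destruct (excluded_middle_informative (P u)) as [HP|HP]; split.
    + intro H. injection H as <-. auto.
    + intros [H _]. injection H as <-. reflexivity.
    + discriminate.
    + intros [H Ht]. injection H as <-. contradiction.
  - split; [discriminate|]. intros [H _]. discriminate.
Qed.

Lemma wt_restrict_disjoint (P Q : list bool -> Prop) c k :
  (forall t, P t -> ~ Q t) ->
  wt (restrict_cover P c k) + wt (restrict_cover Q c k) <= wt (c k).
Proof.
  intro HPQ. unfold restrict_cover. destruct (c k) as [t|]; simpl; [|lra].
  pose proof (pow_half_pos (length t)).
  destruct (excluded_middle_informative (P t)) as [HP|];
    destruct (excluded_middle_informative (Q t)) as [HQ|]; simpl; try lra.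
  exfalso. exact (HPQ t HP HQ).
Qed.

Lemma prefix_member_weight s c M k t :
  (k <= M)%nat -> c k = Some t -> is_prefix t s ->
  (/2) ^ length s <= sum_f_R0 (fun k => wt (c k)) M.
Proof.
  intros Hk Hct [Hts _]. eapply Rle_trans; [apply pow_half_antitone, Hts|].
  replace ((/2) ^ length t) with (wt (c k)) by (rewrite Hct; reflexivity).
  apply (term_le_partial_sum (fun k => wt (c k))); auto using wt_nonneg.
Qed.

Lemma child_fcovers s b c M :
  (forall k t, (k <= M)%nat -> c k = Some t -> ~ is_prefix t s) ->
  fcovers (Nbasic s) c M ->
  fcovers (Nbasic (s ++ [b])) (restrict_cover (is_prefix (s ++ [b])) c) M.
Proof.
  intros Hno Hcov y Hy. destruct (proj1 (Nbasic_snoc _ _ _) Hy) as [Hys _].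
  destruct (Hcov y Hys) as [k [t [Hk [Hct Ht]]]].
  exists k, t. repeat split; auto. apply restrict_cover_Some. split; auto.
  apply (prefix_of_Nbasic _ _ y); auto. rewrite length_app. simpl.
  destruct (Nat.le_gt_cases (length t) (length s)); [|lia].
  exfalso. apply (Hno k t); auto. apply (prefix_of_Nbasic _ _ y); auto.
Qed.

(** Induction on [n], splitting [N_s] into its two halves. *)
Lemma finite_cover_weight n : forall s c M,
  (forall k t, (k <= M)%nat -> c k = Some t -> (length t <= length s + n)%nat) ->
  fcovers (Nbasic s) c M ->
  (/2) ^ length s <= sum_f_R0 (fun k => wt (c k)) M.
Proof.
  induction n as [|n IH]; intros s c M Hlen Hcov;
    (destruct (classic (exists k t, (k <= M)%nat /\ c k = Some t /\ is_prefix t s))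
      as [[k [t [Hk [Hct Hts]]]]|Hno];
     [exact (prefix_member_weight s c M k t Hk Hct Hts)|]).
  - destruct (Hcov (pt s) (Nbasic_pt s)) as [k [t [Hk [Hct Ht]]]].
    exfalso. apply Hno. exists k, t. do 2 (split; [assumption|]).
    apply (prefix_of_Nbasic _ _ (pt s)); auto using Nbasic_pt.
    specialize (Hlen k t Hk Hct). lia.
  - assert (Hno' : forall k t, (k <= M)%nat -> c k = Some t -> ~ is_prefix t s)
      by (intros k t Hk Hct Hts; apply Hno; eauto).
    assert (Hhalf : forall b, (/2) ^ S (length s) <=
              sum_f_R0 (fun k => wt (restrict_cover (is_prefix (s ++ [b])) c k)) M).
    { intro b. replace (S (length s)) with (length (s ++ [b]))
        by (rewrite length_app; simpl; lia).
      apply IH; [|apply child_fcovers; auto].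
      intros k t Hk Ht. apply restrict_cover_Some in Ht as [Hct _].
      specialize (Hlen k t Hk Hct). rewrite length_app. simpl. lia. }
    pose proof (Hhalf false) as H0. pose proof (Hhalf true) as H1.
    assert (Hsum : sum_f_R0 (fun k => wt (restrict_cover (is_prefix (s ++ [false])) c k)) M
                 + sum_f_R0 (fun k => wt (restrict_cover (is_prefix (s ++ [true])) c k)) M
                 <= sum_f_R0 (fun k => wt (c k)) M).
    { rewrite <- plus_sum. apply sum_Rle. intros k _.
      apply wt_restrict_disjoint, children_disjoint. }
    simpl in H0, H1. lra.
Qed.

Lemma cover_bound_basic s l : cover_bound (Nbasic s) l -> (/2) ^ length s <= l.
Proof.
  intros [c [Hc Hl]]. destruct (cylinder_compact s c Hc) as [M HM].
  destruct (cover_length_bound c M) as [B HB].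
  eapply Rle_trans; [apply (finite_cover_weight B s c M)|apply Hl]; auto.
  intros k t Hk Hct. specialize (HB k t Hk Hct). lia.
Qed.

(** * The outer measure [mu] *)

Lemma mu_le (A : cset) (l : R) : cover_bound A l -> mu A <= l.
Proof.
  intro H. unfold mu. destruct (completeness _ _ _) as [s Hs]. simpl.
  assert (- l <= s) by (apply (proj1 Hs); unfold neg_cover_bound; rewrite Ropp_involutive; exact H).
  lra.
Qed.

Lemma mu_ge (A : cset) (m : R) : (forall l, cover_bound A l -> m <= l) -> m <= mu A.
Proof.
  intro H. unfold mu. destruct (completeness _ _ _) as [s Hs]. simpl.
  assert (s <= - m) by (apply (proj2 Hs); intros y Hy; specialize (H _ Hy); lra).
  lra.
Qed.

Lemma cover_bound_mono (A B : cset) l :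
  (forall x, A x -> B x) -> cover_bound B l -> cover_bound A l.
Proof. intros HAB [c [Hc Hl]]. exists c. split; auto. intros x Hx. apply Hc, HAB, Hx. Qed.

Lemma mu_mono (A B : cset) : (forall x, A x -> B x) -> mu A <= mu B.
Proof. intro HAB. apply mu_ge. intros l Hl. apply mu_le. eapply cover_bound_mono; eauto. Qed.

Lemma mu_basic s : mu (Nbasic s) = (/2) ^ length s.
Proof.
  apply Rle_antisym; [|apply mu_ge, cover_bound_basic].
  apply mu_le. exists (fun k => match k with O => Some s | S _ => None end). split.
  - intros x Hx. exists O, s. auto.
  - intro n. induction n as [|n IH]; simpl; lra.
Qed.

Definition interleave (c d : nat -> option (list bool)) (i : nat) : option (list bool) :=
  if Nat.even i then c (Nat.div2 i) else d (Nat.div2 i).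

Lemma sum_interleave c d M :
  sum_f_R0 (fun i => wt (interleave c d i)) (2 * M + 1) =
  sum_f_R0 (fun k => wt (c k)) M + sum_f_R0 (fun k => wt (d k)) M.
Proof.
  induction M as [|M IH].
  - unfold interleave. simpl. lra.
  - replace (2 * S M + 1)%nat with (S (S (2 * M + 1))) by lia.
    rewrite !tech5, IH.
    replace (S (S (2 * M + 1))) with (2 * S M + 1)%nat by lia.
    replace (S (2 * M + 1)) with (2 * S M)%nat by lia.
    unfold interleave. rewrite Nat.even_even, Nat.even_odd, Nat.div2_double, Nat.div2_odd'.
    lra.
Qed.

Lemma cover_bound_union (A B : cset) a b :
  cover_bound A a -> cover_bound B b -> cover_bound (fun x => A x \/ B x) (a + b).
Proof.
  intros [c [Hc Ha]] [d [Hd Hb]]. exists (interleave c d). split.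
  - intros x [Hx|Hx].
    + destruct (Hc x Hx) as [k Hk]. exists (2 * k)%nat.
      unfold interleave. rewrite Nat.even_even, Nat.div2_double. exact Hk.
    + destruct (Hd x Hx) as [k Hk]. exists (2 * k + 1)%nat.
      unfold interleave. rewrite Nat.even_odd, Nat.div2_odd'. exact Hk.
  - intro n. eapply Rle_trans.
    + apply (partial_sum_mono _ n (2 * n + 1)); [intro; apply wt_nonneg | lia].
    + rewrite sum_interleave. specialize (Ha n). specialize (Hb n). lra.
Qed.

Lemma mu_complement_ge (A B : cset) b :
  (forall x, A x \/ B x) -> cover_bound B b -> 1 - b <= mu A.
Proof.
  intros HAB HB. apply mu_ge. intros l HA.
  assert (Hall : cover_bound (Nbasic []) (l + b))
    by exact (cover_bound_mono _ _ _ (fun x _ => HAB x) (cover_bound_union A B l b HA HB)).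
  apply cover_bound_basic in Hall. simpl in Hall. lra.
Qed.

(** * Density and topology *)

Definition density (A : cset) (x : cantor) (n : nat) : R :=
  mu (cinter A (Nbasic (restr x n))) / mu (Nbasic (restr x n)).

Lemma open_sub_Phi (A : cset) x : is_open A -> A x -> Phi A x.
Proof.
  intros HA Hx. destruct (HA x Hx) as [n0 Hn0].
  change (Un_cv (density A x) 1). intros eps Heps. exists n0. intros n Hn.
  assert (Hsub : forall y, Nbasic (restr x n) y -> A y)
    by (intros y Hy; apply Hn0, (Nbasic_restr_sub _ x _ n); auto using Nbasic_restr;
        rewrite restr_length; lia).
  assert (Hfull : mu (cinter A (Nbasic (restr x n))) = mu (Nbasic (restr x n)))
    by (apply Rle_antisym; apply mu_mono; [intros y [_ Hy] | intros y Hy; split]; auto).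
  unfold density. rewrite Hfull, mu_basic. unfold R_dist, Rdiv.
  rewrite Rinv_r by (apply Rgt_not_eq, pow_half_pos).
  rewrite Rminus_diag, Rabs_R0. exact Heps.
Qed.

Lemma low_density_not_Phi (A : cset) x :
  (forall N, exists n, (N <= n)%nat /\ density A x n <= /2) -> ~ Phi A x.
Proof.
  intros Hlow HPhi. destruct (HPhi (/2)) as [N HN]; [lra|].
  destruct (Hlow N) as [n [Hn Hd]]. specialize (HN n Hn).
  unfold R_dist in HN. apply Rabs_def2 in HN. unfold density in Hd. lra.
Qed.

Lemma Fr_of_dense (A : cset) x :
  (forall s, exists y, Nbasic s y /\ A y) -> ~ A x -> Fr A x.
Proof.
  intros Hdense Hx. split.
  - intro n. apply Hdense.
  - intros [n Hn]. apply Hx, Hn, Nbasic_restr.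
Qed.

(** * The example *)

(** An enumeration of all finite strings, through the binary expansion of positive
    integers. *)
Fixpoint string_of_pos (p : positive) : list bool :=
  match p with
  | xH => []
  | xO q => false :: string_of_pos q
  | xI q => true :: string_of_pos q
  end.

Fixpoint pos_of_string (s : list bool) : positive :=
  match s with
  | [] => xH
  | false :: s' => xO (pos_of_string s')
  | true :: s' => xI (pos_of_string s')
  end.

Definition enum_string (j : nat) : list bool := string_of_pos (Pos.of_succ_nat j).

Definition string_index (s : list bool) : nat := Nat.pred (Pos.to_nat (pos_of_string s)).

Lemma enum_string_index s : enum_string (string_index s) = s.
Proof.
  unfold enum_string, string_index.
  rewrite (SuccNat2Pos.inv _ (pos_of_string s))
    by (pose proof (Pos2Nat.is_pos (pos_of_string s)); lia).
  induction s as [|[|] s IH]; simpl; congruence.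
Qed.

Definition block (j : nat) : list bool := enum_string j ++ repeat true (j + 2).

Definition U0 : cset := fun y => exists j, Nbasic (block j) y.

Lemma block_length j : length (block j) = (length (enum_string j) + (j + 2))%nat.
Proof. unfold block. rewrite length_app, repeat_length. auto. Qed.

Lemma block_ones j i :
  (length (enum_string j) <= i < length (block j))%nat -> nth i (block j) false = true.
Proof.
  intros [H1 H2]. rewrite block_length in H2. unfold block.
  rewrite app_nth2 by lia. apply nth_repeat_lt. lia.
Qed.

Lemma prefix_enum_block j : is_prefix (enum_string j) (block j).
Proof. unfold block. split; [rewrite length_app; lia|]. intros i Hi. rewrite app_nth1; auto. Qed.

Lemma weight_block j :
  (/2) ^ length (block j) = (/2) ^ length (enum_string j) * (/2) ^ (j + 2).
Proof. rewrite block_length, pow_add. reflexivity. Qed.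

Lemma geometric_bound M : sum_f_R0 (fun j => (/2) ^ (j + 2)) M <= /2.
Proof.
  assert (Hsum : sum_f_R0 (fun j => (/2) ^ (j + 2)) M = /2 - (/2) ^ (M + 2)).
  { induction M as [|M IH]; [simpl; field|].
    rewrite tech5, IH. replace (S M + 2)%nat with (S (M + 2)) by lia. simpl. field. }
  pose proof (pow_half_pos (M + 2)). lra.
Qed.

Lemma U0_open : is_open U0.
Proof.
  intros x [j Hj]. exists (length (block j)). intros y Hy. exists j.
  apply (Nbasic_restr_sub _ x _ (length (block j))); auto.
Qed.

Lemma U0_dense s : exists y, Nbasic s y /\ U0 y.
Proof.
  exists (pt (block (string_index s))). split.
  - eapply Nbasic_prefix; [|apply Nbasic_pt].
    rewrite <- (enum_string_index s) at 1. apply prefix_enum_block.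
  - exists (string_index s). apply Nbasic_pt.
Qed.

Lemma U0_cover_bound : cover_bound U0 (/2).
Proof.
  exists (fun j => Some (block j)). split.
  - intros y [j Hj]. eauto.
  - intro M. eapply Rle_trans; [|apply (geometric_bound M)].
    apply sum_Rle. intros j _. simpl. apply pow_half_antitone.
    rewrite block_length. lia.
Qed.

(** A point outside [U0] has zeros arbitrarily far out: otherwise it would lie in
    the cylinder of the block built on one of its initial segments. *)
Lemma U0_compl_zeros x : ~ U0 x -> forall N, exists i, (N <= i)%nat /\ x i = false.
Proof.
  intros Hx N. apply NNPP. intro Hnz. apply Hx. exists (string_index (restr x N)).
  intros i Hi. rewrite block_length, enum_string_index, restr_length in Hi.
  unfold block. rewrite enum_string_index.
  destruct (Nat.lt_ge_cases i N).
  - rewrite app_nth1, restr_nth by (rewrite ?restr_length; auto). reflexivity.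
  - rewrite app_nth2, restr_length, nth_repeat_lt by (rewrite ?restr_length; lia).
    destruct (x i) eqn:E; auto. exfalso. apply Hnz. exists i. auto.
Qed.

(** A block meeting a cylinder [N_s] with [s] ending in a zero either extends [s]
    or is an initial segment of [s]: its block of ones cannot cover that zero. *)
Lemma block_meets_zero_cylinder j s y :
  Nbasic (block j) y -> Nbasic s y ->
  (1 <= length s)%nat -> nth (length s - 1) s false = false ->
  is_prefix s (enum_string j) \/ is_prefix (block j) s.
Proof.
  intros Hb Hs Hlen Hzero.
  assert (He : Nbasic (enum_string j) y) by (eapply Nbasic_prefix; [apply prefix_enum_block|exact Hb]).
  destruct (Nat.le_gt_cases (length s) (length (enum_string j))) as [Hle|Hgt].
  - left. eapply prefix_of_Nbasic; eauto.
  - destruct (Nat.le_gt_cases (length (block j)) (length s)) as [Hle'|Hgt'].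
    + right. eapply prefix_of_Nbasic; eauto.
    + exfalso. assert (Hone := block_ones j (length s - 1) ltac:(lia)).
      rewrite <- Hb, Hs in Hone by lia. congruence.
Qed.

(** Near a point outside [U0], at each level where it has a zero, [U0] has density
    at most [1/2]: the relevant blocks are those extending that level, of total
    weight at most [2^{-n} * 1/2]. *)
Lemma U0_low_density x n :
  ~ U0 x -> (1 <= n)%nat -> x (n - 1)%nat = false -> density U0 x n <= /2.
Proof.
  intros Hx Hn Hzero. set (s := restr x n).
  assert (Hs : length s = n) by apply restr_length.
  assert (Hbound : mu (cinter U0 (Nbasic s)) <= (/2) ^ n * /2).
  { apply mu_le.
    exists (fun j => if excluded_middle_informative (is_prefix s (enum_string j))
                     then Some (block j) else None). split.
    - intros y [[j Hj] Hy]. exists j, (block j).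
      destruct (block_meets_zero_cylinder j s y Hj Hy) as [Hp|Hp];
        [lia | rewrite Hs; unfold s; rewrite restr_nth by lia; exact Hzero | |].
      + destruct (excluded_middle_informative _); [auto|contradiction].
      + exfalso. apply Hx. exists j. eapply Nbasic_prefix; [exact Hp|apply Nbasic_restr].
    - intro M. eapply Rle_trans.
      + apply (sum_Rle _ (fun j => (/2) ^ (j + 2) * (/2) ^ n)). intros j _.
        destruct (excluded_middle_informative _) as [[Hl _]|]; simpl.
        * rewrite weight_block, Rmult_comm. apply Rmult_le_compat_l;
            [left; apply pow_half_pos | apply pow_half_antitone; lia].
        * apply Rmult_le_pos; left; apply pow_half_pos.
      + rewrite <- scal_sum. pose proof (geometric_bound M). pose proof (pow_half_pos n).
        apply Rmult_le_compat_l; lra. }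
  unfold density. fold s. rewrite mu_basic, Hs.
  pose proof (pow_half_pos n). unfold Rdiv.
  apply Rmult_le_reg_r with ((/2) ^ n); [lra|].
  rewrite Rmult_assoc, Rinv_l by lra. lra.
Qed.

Lemma Phi_U0 x : Phi U0 x <-> U0 x.
Proof.
  split; [|apply open_sub_Phi, U0_open].
  intro HPhi. apply NNPP. intro Hx. revert HPhi. apply low_density_not_Phi.
  intro N. destruct (U0_compl_zeros x Hx N) as [i [Hi Hxi]].
  exists (S i). split; [lia|]. apply U0_low_density; auto; [lia|].
  replace (S i - 1)%nat with i by lia. exact Hxi.
Qed.

Lemma mu_Fr_U0 : /2 <= mu (Fr U0).
Proof.
  replace (/2) with (1 - /2) by lra.
  apply (mu_complement_ge _ U0); [|exact U0_cover_bound].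
  intro x. destruct (classic (U0 x)) as [Hx|Hx]; [right; exact Hx|].
  left. exact (Fr_of_dense _ _ U0_dense Hx).
Qed.

Theorem corollary7p2 :
  exists U : cset,
    is_open U /\ (forall x, Phi U x <-> U x) /\ 0 < mu (Fr U).
Proof.
  exists U0. split; [exact U0_open|]. split; [exact Phi_U0|].
  pose proof mu_Fr_U0. lra.
Qed.
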